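(* Let $W$ be a finite nonempty subset of $\mathbb{Z}$ with $\gcd(W)=1$. There is an algorithm running in time polynomial in the size of the binary encoding of $W$ that outputs two $W$-reachable integers $p,q$ that are mutually prime, i.e. $\gcd(p,q)=1$.
   Context: An integer $z$ is $W$-reachable if $z\in\langle W\rangle_{\mathbb{N}}=\{\sum_{w\in W}k_w w\mid k_w\in\mathbb{N}\}$, i.e. $z$ is a linear combination of elements of $W$ with nonnegative integer coefficients. *)

From mathcomp Require Import all_boot all_order all_algebra.
Set Implicit Arguments.
Unset Strict Implicit.
Unset Printing Implicit Defensive.
Import Order.TTheory GRing.Theory Num.Theory.
Local Open Scope ring_scope.

(* W-reachability and gcd of a finite set W of integers, given as a   *)
(* duplicate-free list.                                                *)

Definition reachable (W : seq int) (z : int) : Prop :=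
  exists k : int -> nat, z = \sum_(w <- W) (k w)%:Z * w.

Definition gcd_seq (W : seq int) : int := foldr gcdz 0 W.

(* Model of computation: a RAM with integer registers, indirect        *)
(* addressing, arithmetic (+,-,*,div,mod) and conditional jumps, under *)
(* the logarithmic cost model (each step costs 1 + the bit lengths of  *)
(* all the integers it touches).  Polynomial time in this model is     *)
(* polynomially equivalent to polynomial time on Turing machines.      *)

Definition bitlen (z : int) : nat := (trunc_log 2 `|z|%N).+1.

Inductive instr : Type :=
| IConst of nat & int
| IAdd of nat & nat & nat
| ISub of nat & nat & nat
| IMul of nat & nat & nat
| IDiv of nat & nat & nat      (* r := a div b (0 if b = 0) *)
| IMod of nat & nat & nat
| ILoad of nat & nat           (* r := M[ |M[a]| ] *)
| IStore of nat & nat          (* M[ |M[a]| ] := M[r] *)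
| IJlez of nat & nat
| IHalt.

Definition memory := nat -> int.

Definition upd (m : memory) (r : nat) (v : int) : memory :=
  fun i => if i == r then v else m i.

Definition exec (i : instr) (pc : nat) (m : memory) : nat * memory * nat :=
  match i with
  | IConst r c => (pc.+1, upd m r c, (bitlen c).+1)
  | IAdd r a b => (pc.+1, upd m r (m a + m b),
                   (bitlen (m a) + bitlen (m b) + bitlen (m a + m b)).+1)
  | ISub r a b => (pc.+1, upd m r (m a - m b),
                   (bitlen (m a) + bitlen (m b) + bitlen (m a - m b)).+1)
  | IMul r a b => (pc.+1, upd m r (m a * m b),
                   (bitlen (m a) + bitlen (m b) + bitlen (m a * m b)).+1)
  | IDiv r a b => (pc.+1, upd m r (m a %/ m b)%Z,
                   (bitlen (m a) + bitlen (m b) + bitlen (m a %/ m b)%Z).+1)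
  | IMod r a b => (pc.+1, upd m r (m a %% m b)%Z,
                   (bitlen (m a) + bitlen (m b) + bitlen (m a %% m b)%Z).+1)
  | ILoad r a => (pc.+1, upd m r (m `|m a|%N),
                  (bitlen (m a) + bitlen (m `|m a|%N)).+1)
  | IStore a r => (pc.+1, upd m `|m a|%N (m r),
                   (bitlen (m a) + bitlen (m r)).+1)
  | IJlez r l => ((if m r <= 0 then l else pc.+1), m, (bitlen (m r)).+1)
  | IHalt => (pc, m, 0%N)
  end.

(* run the program P from pc with memory m, using at most [fuel] steps;
   returns the final memory and the total cost if it halts (reaches an
   IHalt instruction or a pc outside the program). *)
Fixpoint run (P : seq instr) (fuel : nat) (pc : nat) (m : memory)
  : option (memory * nat) :=
  match fuel with
  | 0 => None
  | f.+1 =>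
    match nth IHalt P pc with
    | IHalt => Some (m, 0%N)
    | i => let: (pc', m', c) := exec i pc m in
           match run P f pc' m' with
           | Some (m'', t) => Some (m'', (t + c)%N)
           | None => None
           end
    end
  end.

(* input encoding: M[0] = |W|, M[1..|W|] = the elements of W, 0 elsewhere *)
Definition init_mem (W : seq int) : memory :=
  fun i => if i == 0%N then (size W)%:Z
           else if (i <= size W)%N then nth 0 W i.-1 else 0.

(* size of the binary encoding of W *)
Definition input_size (W : seq int) : nat :=
  (\sum_(w <- W) (bitlen w).+1)%N.

From mathcomp Require Import all_boot all_order all_algebra.
From mathcomp Require Import zify ring.
Set Implicit Arguments.
Unset Strict Implicit.
Unset Printing Implicit Defensive.
Import Order.TTheory GRing.Theory Num.Theory.
Local Open Scope ring_scope.

(* Let P be the sum of the positive elements of W.  If P > 0, then P * P and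
   P * P + 1 are W-reachable (and coprime); otherwise every element is
   nonpositive, and the same argument applied to -W shows that -(S * S) and
   -(S * S) - 1 are, where S is the sum of W.  A RAM computes P and S in one
   pass over the input.  Every value it ever stores is bounded by
   V = (sum |w| + 8 |W| + 6)^2 + 1, whose bit length is linear in the input
   size s, so each of its O(s) steps costs O(s). *)

(** * Two coprime reachable integers *)

Definition pos_part (w : int) : int := if w <= 0 then 0 else w.

Lemma pos_part_ge0 w : 0 <= pos_part w.
Proof. by rewrite /pos_part; case: ifPn => // /negbTE; rewrite leNgt => /negbFE/ltW. Qed.

Lemma pos_part_le_norm w : `|pos_part w| <= `|w|.
Proof. by rewrite /pos_part; case: ifP. Qed.

Lemma bezout_seq (W : seq int) : uniq W ->
  exists c : int -> int, \sum_(w <- W) c w * w = gcd_seq W.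
Proof.
elim: W => [|w W IH] /=; first by exists (fun=> 0); rewrite big_nil.
case/andP=> wW /IH [c c_W].
have [u [v uv]] := Bezoutz w (gcd_seq W).
exists (fun x => if x == w then u else v * c x).
rewrite big_cons eqxx -uv -c_W mulr_sumr; congr (_ + _).
rewrite !big_seq; apply: eq_bigr => x xW.
by rewrite ifN ?mulrA //; apply: contraNneq wW => <-.
Qed.

Lemma reachable_opp (W : seq int) z : reachable (map -%R W) z -> reachable W (- z).
Proof.
case=> k ->; exists (fun w => k (- w)).
by rewrite big_map -sumrN; apply: eq_bigr => w _; rewrite mulrN opprK.
Qed.

Lemma gcd_seq_opp (W : seq int) : gcd_seq (map -%R W) = gcd_seq W.
Proof. by elim: W => //= w W IH; rewrite IH gcdNz. Qed.

Lemma gcd_seq_eq0 (W : seq int) : {in W, forall w, w = 0} -> gcd_seq W = 0.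
Proof.
elim: W => //= w W IH W0.
rewrite (W0 w (mem_head _ _)) IH // => x xW.
by apply: W0; rewrite in_cons xW orbT.
Qed.

Lemma sum_pos_part_le0 (W : seq int) :
  \sum_(w <- W) pos_part w <= 0 -> {in W, forall w, w <= 0}.
Proof.
move=> P_le0 w wW.
have : \sum_(w <- W) pos_part w == 0.
  by rewrite eq_le P_le0 sumr_ge0 // => *; apply: pos_part_ge0.
rewrite psumr_eq0 => [/allP/(_ w wW)|*]; last exact: pos_part_ge0.
by move/eqP; rewrite /pos_part; case: ifP => // w_gt0 w0; subst w.
Qed.

Lemma reachable_sum (W : seq int) (c : int -> int) :
  {in W, forall w, 0 <= c w} -> reachable W (\sum_(w <- W) c w * w).
Proof.
move=> c_ge0; exists (fun w => `|c w|%N).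
by rewrite !big_seq; apply: eq_bigr => w wW; rewrite abszE ger0_norm ?c_ge0.
Qed.

Lemma sum_pos_coef (W : seq int) (c : int) :
  \sum_(w <- W) (if w <= 0 then 0 else c) * w = c * \sum_(w <- W) pos_part w.
Proof.
by rewrite mulr_sumr; apply: eq_bigr => w _; rewrite /pos_part; case: ifP; rewrite ?mul0r ?mulr0.
Qed.

(* Reduce the Bezout coefficients of [1] modulo [P]: [1 = P * y + x] with
   [x] a combination with coefficients in [[0, P)], so [x <= (P - 1) * P] and
   hence [P + y >= 0]; then [P * P + 1 = x + (P + y) * P]. *)
Lemma reachable_sqr_sum_pos_part (W : seq int) : uniq W -> gcd_seq W = 1 ->
  let P := \sum_(w <- W) pos_part w in
  0 < P -> reachable W (P * P) /\ reachable W (P * P + 1).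
Proof.
move=> uW W1 P P_gt0.
have pos_coef_ge0 (c w : int) : 0 <= c -> 0 <= (if w <= 0 then 0 else c) by case: ifP.
have scale (c : int) : \sum_(w <- W) (if w <= 0 then 0 else c) * w = c * P.
  exact: sum_pos_coef.
split; first by rewrite -scale; apply: reachable_sum => w _; apply/pos_coef_ge0/ltW.
have [c c_W] := bezout_seq uW; rewrite W1 in c_W.
pose r w := (c w %% P)%Z; pose q w := (c w %/ P)%Z.
pose x := \sum_(w <- W) r w * w; pose y := \sum_(w <- W) q w * w.
have one_eq : 1 = P * y + x.
  rewrite -c_W /x /y mulr_sumr -big_split /=; apply: eq_bigr => w _.
  by rewrite {1}(divz_eq (c w) P) /r /q; ring.
have x_le : x <= (P - 1) * P.
  rewrite -scale; apply: ler_sum => w _; case: ifP => w_le0.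
    by rewrite mul0r mulr_ge0_le0 ?modz_ge0 ?gt_eqF.
  apply: ler_wpM2r; first by rewrite ltW // ltNge w_le0.
  by rewrite -ltzD1 subrK ltz_pmod.
have Py_ge0 : 0 <= P + y by nia.
rewrite (_ : P * P + 1 = x + (P + y) * P); last by rewrite one_eq; ring.
rewrite -scale /x -big_split /=.
under eq_bigr do rewrite -mulrDl.
by apply: reachable_sum => w _; rewrite addr_ge0 ?modz_ge0 ?gt_eqF ?pos_coef_ge0.
Qed.

Lemma reachable_sqr_sum_nonpos (W : seq int) : uniq W -> gcd_seq W = 1 ->
  \sum_(w <- W) pos_part w <= 0 ->
  let S := \sum_(w <- W) w in
  reachable W (- (S * S)) /\ reachable W (- (S * S) - 1).
Proof.
move=> uW W1 /sum_pos_part_le0 W_le0 S.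
have sum_opp : \sum_(w <- map -%R W) pos_part w = - S.
  rewrite big_map -sumrN !big_seq; apply: eq_bigr => w wW.
  rewrite /pos_part oppr_le0; case: ifP => // w_ge0.
  by apply/eqP; rewrite eq_sym oppr_eq0 eq_le W_le0.
have oppS_gt0 : 0 < - S.
  rewrite lt_def -sum_opp sumr_ge0 ?andbT => [|w _]; last exact: pos_part_ge0.
  apply: contra_eqN W1 => /eqP S0; rewrite gcd_seq_eq0 // => w wW.
  have /sum_pos_part_le0 /(_ (- w)) : \sum_(w <- map -%R W) pos_part w <= 0 by rewrite S0.
  by rewrite map_f // oppr_le0 => /(_ isT) w_ge0; apply/eqP; rewrite eq_le W_le0.
have uW' : uniq (map -%R W) by rewrite map_inj_uniq //; exact: oppr_inj.
have W'1 : gcd_seq (map -%R W) = 1 by rewrite gcd_seq_opp.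
have /= := reachable_sqr_sum_pos_part uW' W'1; rewrite sum_opp => /(_ oppS_gt0) [].
rewrite mulrNN => /reachable_opp reach_sqr /reachable_opp.
by rewrite opprD.
Qed.

Definition output_pair (P S : int) : int * int :=
  if 0 < P then (P * P, P * P + 1) else (- (S * S), - (S * S) - 1).

Lemma output_pair_coprime P S : gcdz (output_pair P S).1 (output_pair P S).2 = 1.
Proof. by rewrite /output_pair; case: ifP => _ /=; rewrite gcdzDl ?gcdzN gcdz1. Qed.

Lemma output_pair_reachable (W : seq int) : uniq W -> gcd_seq W = 1 ->
  let: (p, q) := output_pair (\sum_(w <- W) pos_part w) (\sum_(w <- W) w) in
  reachable W p /\ reachable W q.
Proof.
move=> uW W1; rewrite /output_pair; case: ltP => [P_gt0|P_le0].
  exact: reachable_sqr_sum_pos_part.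
exact: reachable_sqr_sum_nonpos.
Qed.

(** * Executions with bounded memory *)

Lemma upd_eq (m : memory) r v : upd m r v r = v.
Proof. by rewrite /upd eqxx. Qed.

Lemma upd_neq (m : memory) r v a : a != r -> upd m r v a = m a.
Proof. by rewrite /upd => /negbTE->. Qed.

Lemma bitlen_le_norm (z V : int) : `|z| <= V -> (bitlen z <= bitlen V)%N.
Proof.
move=> zV; rewrite /bitlen ltnS leq_trunc_log // -lez_nat !abszE.
by rewrite (ger0_norm (le_trans (normr_ge0 z) zV)).
Qed.

Definition bounded (V : int) (m : memory) : Prop := forall a, `|m a| <= V.

Lemma bounded_upd V m r v : bounded V m -> `|v| <= V -> bounded V (upd m r v).
Proof. by move=> mV vV a; rewrite /upd; case: ifP. Qed.

Lemma exec_cost_le V i pc m : bounded V m -> bounded V (exec i pc m).1.2 ->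
  ((exec i pc m).2 <= (3 * bitlen V).+1)%N.
Proof.
move=> mV m'V; have bl a := bitlen_le_norm (mV a).
case: i m'V => [r c|r a b|r a b|r a b|r a b|r a b|r a|a r|r l|] //= /(_ r);
  rewrite ?upd_eq => /bitlen_le_norm; try have := bl a; try have := bl b; try have := bl r;
  try have := bl `|m a|%N; lia.
Qed.

Lemma run_next P f pc m pc' m' c :
  nth IHalt P pc <> IHalt -> exec (nth IHalt P pc) pc m = (pc', m', c) ->
  run P f.+1 pc m =
    if run P f pc' m' is Some (m'', t) then Some (m'', (t + c)%N) else None.
Proof.
rewrite /=; case: (nth IHalt P pc) => // [r d|r a b|r a b|r a b|r a b|r a b|r a|a r|r l] _;
  by case=> <- <- <-.
Qed.

Section Steps.
Variables (V : int) (P : seq instr).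

(* Once the initial memory is V-bounded, so is every memory along the run;
   this is what bounds the cost of each step (see [exec_cost_le]). *)
Inductive steps : nat -> memory -> nat -> memory -> nat -> Prop :=
| steps_refl pc m : steps pc m pc m 0
| steps_next pc m pc' m' pc'' m'' k :
    nth IHalt P pc <> IHalt -> (exec (nth IHalt P pc) pc m).1 = (pc', m') ->
    (bounded V m -> bounded V m') ->
    steps pc' m' pc'' m'' k -> steps pc m pc'' m'' k.+1.

Lemma steps_run pc m pc' m' k : steps pc m pc' m' k -> bounded V m ->
  nth IHalt P pc' = IHalt ->
  exists t, run P k.+1 pc m = Some (m', t) /\ (t <= k * (3 * bitlen V).+1)%N.
Proof.
elim=> [{}pc {}m|{}pc {}m pc1 m1 {}pc' {}m' {}k halt_pc exec_pc mV1 _ IH] mV halt'.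
  by exists 0%N; rewrite /= halt'.
have [t [run1 t_le]] := IH (mV1 mV) halt'.
case ex: (exec (nth IHalt P pc) pc m) exec_pc => [[pc2 m2] c] [e1 e2].
subst pc2 m2; exists (t + c)%N; rewrite (run_next _ halt_pc ex) run1; split=> //.
have := @exec_cost_le V (nth IHalt P pc) pc m mV; rewrite ex => /(_ (mV1 mV)).
by move=> /= c_le; rewrite [(k.+1 * _)%N]mulSn addnC leq_add.
Qed.

Lemma steps_cat pc1 m1 pc2 m2 pc3 m3 k1 k2 :
  steps pc1 m1 pc2 m2 k1 -> steps pc2 m2 pc3 m3 k2 -> steps pc1 m1 pc3 m3 (k1 + k2).
Proof.
elim=> // pc m pc' m' pc'' m'' k halt ex mV _ IH /IH.
exact: steps_next halt ex mV.
Qed.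

(* [r'] and [v'] let the caller state the written register and value in normal form. *)
Lemma steps_upd pc m r v c r' v' pc' m' k :
  exec (nth IHalt P pc) pc m = (pc.+1, upd m r v, c) -> r = r' -> v = v' ->
  `|v'| <= V -> steps pc.+1 (upd m r' v') pc' m' k -> steps pc m pc' m' k.+1.
Proof.
move=> ex <- <- vV rest; apply: steps_next rest.
- by move=> halt; move: ex; rewrite halt => -[/n_Sn].
- by rewrite ex.
- by move/bounded_upd; apply.
Qed.

Lemma steps_jump pc m r l pc' m' k :
  nth IHalt P pc = IJlez r l -> m r <= 0 ->
  steps l m pc' m' k -> steps pc m pc' m' k.+1.
Proof.
move=> ins cond rest; apply: steps_next rest; first by rewrite ins.
- by rewrite ins /= cond.
- by [].
Qed.

Lemma steps_skip pc m r l pc' m' k :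
  nth IHalt P pc = IJlez r l -> 0 < m r ->
  steps pc.+1 m pc' m' k -> steps pc m pc' m' k.+1.
Proof.
move=> ins cond rest; apply: steps_next rest; first by rewrite ins.
- by rewrite ins /= leNgt cond.
- by [].
Qed.

End Steps.

Lemma size_le_input_size (W : seq int) : (size W <= input_size W)%N.
Proof.
rewrite /input_size; elim: W => [|w W IH]; first by rewrite big_nil.
by rewrite big_cons /=; lia.
Qed.

Lemma sum_norm_lt_input_size (W : seq int) :
  (\sum_(w <- W) `|w|%N < 2 ^ input_size W)%N.
Proof.
rewrite /input_size; elim: W => [|w W IH]; first by rewrite !big_nil.
rewrite !big_cons expnD expnS.
have w_lt : (`|w|%N < 2 ^ bitlen w)%N by apply: trunc_log_ltn.
have := expn_gt0 2 (bitlen w); have := expn_gt0 2 (\sum_(j <- W) (bitlen j).+1).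
nia.
Qed.

Lemma bitlen_le (z : int) b : (0 < b)%N -> (`|z|%N < 2 ^ b)%N -> (bitlen z <= b)%N.
Proof.
move=> b_gt0 z_lt; rewrite /bitlen; have [->|z_gt0] := posnP `|z|%N; first by rewrite trunc_log0.
by rewrite -(ltn_exp2l _ _ (isT : 1 < 2)%N); apply: leq_ltn_trans z_lt; apply: trunc_logP.
Qed.

(** * The program *)

(* Registers: 0 holds the end E = 8n + 6 of the scanned cells, 1 the constant 1,
   2 the current cell j, 3 and 4 the sums of the positive parts and of the cells
   seen so far, 5 and 6 are scratch.  The first 16 instructions move the input
   cells 1..6 to 8n..8n+5, so that the loop scans the cells [7, E), which hold W
   followed by zeros. *)
Definition prog : seq instr :=
  [:: IAdd 0 0 0; IAdd 0 0 0; IAdd 0 0 0; IStore 0 1; IConst 1 1; IAdd 0 0 1;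
      IStore 0 2; IAdd 0 0 1; IStore 0 3; IAdd 0 0 1; IStore 0 4; IAdd 0 0 1;
      IStore 0 5; IAdd 0 0 1; IStore 0 6; IAdd 0 0 1;
      IConst 2 7; IConst 3 0; IConst 4 0;
  (* 19 *) ISub 6 0 2; IJlez 6 28; ILoad 5 2; IAdd 4 4 5; IAdd 2 2 1;
           IJlez 5 19; IAdd 3 3 5; ISub 5 5 5; IJlez 5 19;
  (* 28 *) IJlez 3 32; IMul 0 3 3; IAdd 1 0 1; IHalt;
  (* 32 *) IMul 4 4 4; IConst 5 0; ISub 0 5 4; ISub 1 0 1; IHalt].

Lemma init_mem_succ (W : seq int) a : init_mem W a.+1 = nth 0 W a.
Proof. by rewrite /init_mem /=; case: ltnP => // le_n_a; rewrite nth_default. Qed.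

Ltac simpl_upd := repeat (rewrite upd_eq || (rewrite upd_neq; last by lia)).

Lemma cell_neq_reg a r : (6 < a)%N -> (r < 7)%N -> (a == r) = false.
Proof. by move=> a_gt r_lt; apply/eqP; lia. Qed.

Section Verification.
Variable W : seq int.
Hypothesis W_nonempty : (0 < size W)%N.
Local Notation n := (size W).
Local Notation B := (8 * n)%N.
Local Notation E := (B + 6)%N.
Local Notation T := (\sum_(w <- W) `|w|).
Local Notation V := ((T + E%:Z) ^+ 2 + 1).

Lemma T_ge0 : 0 <= T.
Proof. exact: sumr_ge0. Qed.

Lemma le_V (x : int) : `|x| <= T + E%:Z -> `|x| <= V.
Proof.
have := T_ge0; have : 7 <= E%:Z by rewrite lez_nat; lia.
nia.
Qed.

Lemma range_le_V (x : int) : 0 <= x <= E%:Z -> `|x| <= V.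
Proof. by move=> x_bd; apply: le_V; rewrite ger0_norm; have := T_ge0; lia. Qed.

Lemma sqr_add1_le_V (x : int) : `|x| <= T -> `|x * x| + 1 <= V.
Proof.
rewrite normrM => x_le; have := T_ge0; have := normr_ge0 x.
have : 0 <= E%:Z by [].
nia.
Qed.

Lemma norm_nth_le a : `|nth 0 W a| <= T.
Proof.
case: (ltnP a n) => [a_lt|a_ge]; last by rewrite nth_default // normr0 T_ge0.
rewrite (big_rem _ (mem_nth 0 a_lt)) /= lerDl; exact: sumr_ge0.
Qed.

Lemma init_mem0 : init_mem W 0 = n%:Z.
Proof. by []. Qed.

Lemma init_bounded : bounded V (init_mem W).
Proof.
case=> [|a]; first by rewrite init_mem0; apply: range_le_V; lia.
by rewrite init_mem_succ; apply: le_V; have := norm_nth_le a; have := T_ge0; lia.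
Qed.

Record copied (i : nat) (m : memory) : Prop := Copied {
  copied_addr : m 0%N = (B + i)%N%:Z;
  copied_one : m 1%N = 1;
  copied_low : forall a, (1 < a < B)%N -> m a = init_mem W a;
  copied_high : forall k, (k < i)%N -> m (B + k)%N = init_mem W k.+1 }.

Record loop_inv (D : memory) (j : nat) (m : memory) : Prop := LoopInv {
  inv_end : m 0%N = E%:Z;
  inv_one : m 1%N = 1;
  inv_index : m 2%N = j%:Z;
  inv_pos : m 3%N = \sum_(7 <= a < j) pos_part (D a);
  inv_sum : m 4%N = \sum_(7 <= a < j) D a;
  inv_cells : forall a, (6 < a)%N -> m a = D a }.

Lemma sum_init_mem (f : int -> int) : f 0 = 0 ->
  \sum_(1 <= a < B) f (init_mem W a) = \sum_(w <- W) f w.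
Proof.
move=> f0; rewrite [RHS](big_nth 0) -{1}[1%N]add0n big_addn (@big_cat_nat _ _ _ n) /=; last 2 first.
- by [].
- by lia.
rewrite [X in _ + X]big_nat_cond [X in _ + X]big1 ?addr0 => [|i /andP[/andP[n_le _] _]].
  by apply: eq_bigr => i _; rewrite addn1 init_mem_succ.
by rewrite addn1 init_mem_succ nth_default.
Qed.

Lemma sum_cells (D : memory) (f : int -> int) : f 0 = 0 ->
  (forall a, (6 < a < B)%N -> D a = init_mem W a) ->
  (forall k, (k < 6)%N -> D (B + k)%N = init_mem W k.+1) ->
  \sum_(7 <= a < E) f (D a) = \sum_(w <- W) f w.
Proof.
move=> f0 D_low D_high; rewrite -sum_init_mem // (@big_cat_nat _ _ _ B) /=; last 2 first.
- by lia.
- by lia.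
rewrite [RHS](@big_cat_nat _ _ _ 7) //=; last by lia.
rewrite [RHS]addrC; congr (_ + _); first by apply: eq_big_nat => a a_bd; rewrite D_low.
rewrite (big_addn 0 E B) (big_addn 0 7 1) addKn.
by apply: eq_big_nat => i i_lt; rewrite addnC D_high ?addn1.
Qed.

Lemma boot_prefix : exists m, steps V prog 0 (init_mem W) 6 m 6 /\ copied 1 m.
Proof.
eexists; split.
  apply: (steps_upd (v' := (2 * n)%N%:Z)) => //; [by rewrite init_mem0; lia | apply: range_le_V; lia |].
  apply: (steps_upd (v' := (4 * n)%N%:Z)) => //; [by simpl_upd; lia | apply: range_le_V; lia |].
  apply: (steps_upd (v' := B%:Z)) => //; [by simpl_upd; lia | apply: range_le_V; lia |].
  apply: (steps_upd (r' := B) (v' := init_mem W 1)) => //; first exact: init_bounded.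
  apply: steps_upd => //; first by apply: range_le_V; lia.
  apply: (steps_upd (v' := (B + 1)%N%:Z)) => //; [by simpl_upd; lia | apply: range_le_V; lia |].
  exact: steps_refl.
split; simpl_upd => //.
- by move=> a a_B; simpl_upd.
- by case=> // _; rewrite addn0; simpl_upd.
Qed.

Lemma copy_next i pc m :
  nth IHalt prog pc = IStore 0 i.+1 -> nth IHalt prog pc.+1 = IAdd 0 0 1 ->
  (0 < i < 6)%N -> copied i m ->
  exists m', steps V prog pc m pc.+2 m' 2 /\ copied i.+1 m'.
Proof.
move=> store add i_bd [addr one low high]; eexists; split.
  apply: (steps_upd (r' := (B + i)%N) (v' := init_mem W i.+1)).
  - by rewrite store.
  - by rewrite addr.
  - by rewrite low //; lia.
  - exact: init_bounded.
  apply: (steps_upd (v' := (B + i.+1)%N%:Z)).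
  - by rewrite add.
  - by [].
  - by simpl_upd; rewrite addr one; lia.
  - by apply: range_le_V; lia.
  exact: steps_refl.
split; simpl_upd => //.
- by move=> a a_B; simpl_upd; apply: low.
- move=> k; rewrite ltnS leq_eqVlt => /orP[/eqP->|k_lt]; simpl_upd => //.
  exact: high.
Qed.

Lemma boot : exists D, [/\ steps V prog 0 (init_mem W) 19 D 19, loop_inv D 7 D &
  forall f : int -> int, f 0 = 0 -> \sum_(7 <= a < E) f (D a) = \sum_(w <- W) f w].
Proof.
have [m1 [S1 C1]] := boot_prefix.
have [m2 [S2 C2]] := copy_next (pc := 6) (erefl _) (erefl _) isT C1.
have [m3 [S3 C3]] := copy_next (pc := 8) (erefl _) (erefl _) isT C2.
have [m4 [S4 C4]] := copy_next (pc := 10) (erefl _) (erefl _) isT C3.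
have [m5 [S5 C5]] := copy_next (pc := 12) (erefl _) (erefl _) isT C4.
have [m6 [S6 [addr one low high]]] := copy_next (pc := 14) (erefl _) (erefl _) isT C5.
eexists; split.
- apply: steps_cat (steps_cat S1 (steps_cat S2 (steps_cat S3 (steps_cat S4 (steps_cat S5 S6))))) _.
  do 3 (apply: steps_upd => //; first by apply: range_le_V; lia).
  exact: steps_refl.
- by split; simpl_upd => //; rewrite big_geq.
- move=> f f0; apply: sum_cells => // [a a_B|k k_lt]; simpl_upd; [apply: low | apply: high]; lia.
Qed.

Section Loop.
Variable D : memory.
Hypothesis D_norm : \sum_(7 <= a < E) `|D a| <= T.

Lemma norm_cell_le j : (6 < j < E)%N -> `|D j| <= T.
Proof.
move=> j_bd; apply: le_trans _ D_norm.
rewrite (@big_cat_nat _ _ _ j) /=; [|lia..].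
rewrite [X in _ + X]big_ltn; last by case/andP: j_bd.
by rewrite addrCA lerDl addr_ge0 ?sumr_ge0.
Qed.

Lemma norm_partial_sum_le (F : int -> int) j : (forall x, `|F x| <= `|x|) ->
  (j <= E)%N -> `|\sum_(7 <= a < j) F (D a)| <= T.
Proof.
move=> F_le j_le; apply: le_trans (ler_norm_sum _ _ _) _; apply: le_trans _ D_norm.
have [j_ge|j_lt] := leqP 7 j; last by rewrite big_geq ?sumr_ge0 // ltnW.
rewrite [X in _ <= X](@big_cat_nat _ _ _ j) //= -[X in X <= _]addr0.
by apply: lerD; [apply: ler_sum => a _; apply: F_le | apply: sumr_ge0].
Qed.

Lemma loop_body j m : (6 < j < E)%N -> loop_inv D j m ->
  steps V prog 19 m 24 (upd (upd (upd (upd m 6 (E%:Z - j%:Z)) 5 (D j)) 4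
                               (\sum_(7 <= a < j.+1) D a)) 2 j.+1%:Z) 5.
Proof.
move=> j_bd [m0 m1 m2 _ m4 mD]; have /andP[j_gt6 j_lt] := j_bd.
have Dj_le := norm_cell_le j_bd; have T_ge0 := T_ge0.
have S_le := @norm_partial_sum_le id j.+1 (fun x => lexx _) j_lt.
apply: (steps_upd (v' := E%:Z - j%:Z)) => //; first by rewrite m0 m2.
  by apply: range_le_V; lia.
apply: steps_skip => //; first by rewrite upd_eq; lia.
apply: (steps_upd (v' := D j)) => //.
  by rewrite /upd /= m2 /= (cell_neq_reg j_gt6) // mD.
  by apply: le_V; lia.
apply: (steps_upd (v' := \sum_(7 <= a < j.+1) D a)) => //.
  by rewrite /upd /= m4 big_nat_recr.
  by apply: le_V; lia.
apply: (steps_upd (v' := j.+1%:Z)) => //.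
  by rewrite /upd /= m2 m1; lia.
  by apply: range_le_V; lia.
exact: steps_refl.
Qed.

Lemma loop_step j m : (6 < j < E)%N -> loop_inv D j m ->
  exists m' k, [/\ steps V prog 19 m 19 m' k, (k <= 9)%N & loop_inv D j.+1 m'].
Proof.
move=> j_bd inv; have body := loop_body j_bd inv.
case: inv => m0 m1 m2 m3 m4 mD; have /andP[j_gt6 j_lt] := j_bd.
have P_next : \sum_(7 <= a < j.+1) pos_part (D a) =
              \sum_(7 <= a < j) pos_part (D a) + pos_part (D j) by rewrite big_nat_recr.
set M := upd _ 2 _ in body.
have M_cells a : (6 < a)%N -> M a = D a.
  by move=> a_gt6; rewrite /M /upd !(cell_neq_reg a_gt6) // mD.
case: (lerP (D j) 0) => Dj_sign.
  exists M, 6%N; split => //.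
    by apply: steps_cat body _; apply: steps_jump => //; apply: steps_refl.
  split => //; rewrite /M /upd /= ?m0 ?m1 ?m3 ?P_next //.
  by rewrite /pos_part Dj_sign addr0.
exists (upd (upd M 3 (\sum_(7 <= a < j.+1) pos_part (D a))) 5 0), 9%N; split => //.
  apply: steps_cat body _; apply: steps_skip => //.
  apply: (steps_upd (v' := \sum_(7 <= a < j.+1) pos_part (D a))) => //.
    by rewrite /M /upd /= m3 P_next /pos_part lt_geF.
    by apply: le_V; have := norm_partial_sum_le pos_part_le_norm j_lt; have := T_ge0; lia.
  apply: (steps_upd (v' := 0)) => //; first by rewrite subrr.
    by apply: range_le_V; lia.
  by apply: steps_jump => //; apply: steps_refl.
split => //; rewrite ?upd_neq //= => a a_gt6.
by rewrite !upd_neq ?M_cells //; apply/negbT; rewrite (cell_neq_reg a_gt6).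
Qed.

Lemma loop_run j m : (6 < j <= E)%N -> loop_inv D j m ->
  exists m' k, [/\ steps V prog 19 m 28 m' k, (k <= 9 * (E - j) + 2)%N & loop_inv D E m'].
Proof.
move Ed: (E - j)%N => d; elim: d j m Ed => [|d IH] j m Ed j_bd inv.
  have j_eq : j = E by lia.
  subst j; case: inv => m0 m1 m2 m3 m4 mD.
  exists (upd m 6 0), 2%N; split => //.
    apply: (steps_upd (v' := 0)) => //; first by rewrite m0 m2 subrr.
      by apply: range_le_V; lia.
    by apply: steps_jump => //; apply: steps_refl.
  by split; rewrite ?upd_neq // => a a_gt6; rewrite upd_neq ?mD //; apply/negbT/cell_neq_reg.
have j_lt : (6 < j < E)%N by lia.
have [m1 [k1 [S1 k1_le inv1]]] := loop_step j_lt inv.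
have Ed' : (E - j.+1)%N = d by lia.
have j_bd' : (6 < j.+1 <= E)%N by lia.
have [m2 [k2 [S2 k2_le inv2]]] := IH j.+1 m1 Ed' j_bd' inv1.
by exists m2, (k1 + k2)%N; split; [exact: steps_cat S1 S2 | lia |].
Qed.

Lemma loop_exit m : loop_inv D E m ->
  exists pc m' k, [/\ steps V prog 28 m pc m' k, (k <= 5)%N,
    nth IHalt prog pc = IHalt &
    (m' 0%N, m' 1%N) = output_pair (\sum_(7 <= a < E) pos_part (D a))
                                   (\sum_(7 <= a < E) D a)].
Proof.
case=> m0 m1 _ m3 m4 _.
have P_le := norm_partial_sum_le pos_part_le_norm (leqnn E).
have S_le := @norm_partial_sum_le id E (fun x => lexx _) (leqnn E).
set P := \sum_(7 <= a < E) pos_part (D a) in m3 P_le *.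
set S := \sum_(7 <= a < E) D a in m4 S_le *.
have sqr_P := sqr_add1_le_V P_le; have sqr_S := sqr_add1_le_V S_le.
rewrite /output_pair; case: ltP => P_sign.
  exists 31%N, (upd (upd m 0 (P * P)) 1 (P * P + 1)), 3%N; split => //.
  apply: steps_skip => //; first by rewrite m3.
  apply: (steps_upd (v' := P * P)) => //; first by rewrite m3.
    by have := normr_ge0 (P * P); lia.
  apply: (steps_upd (v' := P * P + 1)) => //; first by rewrite /upd /= m1.
    by apply: le_trans (ler_normD _ _) _; rewrite normr1.
  exact: steps_refl.
exists 36%N, (upd (upd (upd (upd m 4 (S * S)) 5 0) 0 (- (S * S))) 1 (- (S * S) - 1)), 5%N.
split => //.
apply: steps_jump => //; first by rewrite m3.
apply: (steps_upd (v' := S * S)) => //; first by rewrite m4.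
  by have := normr_ge0 (S * S); lia.
apply: steps_upd => //; first by apply: range_le_V; lia.
apply: (steps_upd (v' := - (S * S))) => //; first by rewrite /upd /= sub0r.
  by rewrite normrN; have := normr_ge0 (S * S); lia.
apply: (steps_upd (v' := - (S * S) - 1)) => //; first by rewrite /upd /= m1.
  by rewrite -opprD normrN; apply: le_trans (ler_normD _ _) _; rewrite normr1.
exact: steps_refl.
Qed.

End Loop.

Lemma prog_correct : exists fuel m t, [/\ run prog fuel 0 (init_mem W) = Some (m, t),
  (t <= (9 * E + 26) * (3 * bitlen V).+1)%N &
  (m 0%N, m 1%N) = output_pair (\sum_(w <- W) pos_part w) (\sum_(w <- W) w)].
Proof.
have [D [S0 inv7 sum_D]] := boot.
have D_norm : \sum_(7 <= a < E) `|D a| <= T by rewrite sum_D ?normr0.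
have le7E : (6 < 7 <= E)%N by lia.
have [m1 [k1 [S1 k1_le inv1]]] := loop_run D_norm le7E inv7.
have [pc [m2 [k2 [S2 k2_le halt out]]]] := loop_exit D_norm inv1.
have [t [run_t t_le]] := steps_run (steps_cat S0 (steps_cat S1 S2)) init_bounded halt.
exists (19 + (k1 + k2)).+1, m2, t; split.
- exact: run_t.
- apply: leq_trans t_le _; rewrite leq_mul2r; apply/orP; right.
  by lia.
- have sum_id : \sum_(7 <= a < E) D a = \sum_(w <- W) w by exact: sum_D.
  by rewrite -sum_id -(sum_D pos_part); first exact: out.
Qed.

Lemma prog_cost_le :
  ((9 * E + 26) * (3 * bitlen V).+1 <= 2240 * (input_size W).+1 ^ 2)%N.
Proof.
set s := input_size W.
have n_le : (n <= s)%N := size_le_input_size W.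
have TN_lt := sum_norm_lt_input_size W.
have s_lt : (s < 2 ^ s)%N := ltn_expl s (isT : 1 < 2)%N.
have T_nat : T = (\sum_(w <- W) `|w|%N)%N%:Z.
  by elim: (W) => [|w W' IH]; rewrite ?big_nil // !big_cons PoszD IH abszE.
set Y := (\sum_(w <- W) `|w|%N)%N in T_nat TN_lt.
have V_nat : `|V|%N = ((Y + E) * (Y + E)).+1.
  apply/eqP; rewrite -eqz_nat abszE ger0_norm T_nat; last by apply: addr_ge0; rewrite // expr2 mulr_ge0.
  apply/eqP; rewrite expr2; lia.
have V_bitlen : (bitlen V <= 2 * s + 9)%N.
  apply: bitlen_le; first by rewrite addnS.
  have -> : (2 ^ (2 * s + 9) = 2 ^ s * 2 ^ s * 512)%N.
    by rewrite expnD mul2n -addnn expnD.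
  rewrite V_nat; set X := (2 ^ s)%N in TN_lt s_lt *.
  have : (Y + E < 16 * X)%N by lia.
  nia.
by nia.
Qed.

End Verification.

Theorem proposition11 :
  exists (P : seq instr) (k c : nat),
  forall W : seq int,
    uniq W -> W != [::] -> gcd_seq W = 1 ->
    exists (fuel : nat) (m : memory) (t : nat),
      run P fuel 0 (init_mem W) = Some (m, t) /\
      (t <= k * (input_size W).+1 ^ c)%N /\
      reachable W (m 0%N) /\ reachable W (m 1%N) /\
      gcdz (m 0%N) (m 1%N) = 1.
Proof.
exists prog, 2240%N, 2%N => W uW W_neq0 W1.
have W_pos : (0 < size W)%N by rewrite lt0n size_eq0.
have [fuel [m [t [run_m t_le out]]]] := prog_correct W_pos.
exists fuel, m, t; split; first exact: run_m.
split; first exact: leq_trans t_le (prog_cost_le W_pos).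
have := output_pair_reachable uW W1.
have := output_pair_coprime (\sum_(w <- W) pos_part w) (\sum_(w <- W) w).
by rewrite -out => /= m_coprime [reach0 reach1].
Qed.
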